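(* Let $s$ be a stream type and $p$ a prefix with $p : s$. If $s$ is nullable, then $p = \mathrm{emp}(s)$.
   Context: Stream types are generated by $s,t ::= 1 \mid \varepsilon \mid s\cdot t \mid s\,\|\,t \mid s+t \mid s^\star$. Prefixes are generated by $p ::= \mathtt{oneEmp} \mid \mathtt{oneFull} \mid \mathtt{epsEmp} \mid \mathtt{par}(p,p') \mid \mathtt{catA}(p) \mid \mathtt{catB}(p,p') \mid \mathtt{sumEmp} \mid \mathtt{inl}(p) \mid \mathtt{inr}(p) \mid \mathtt{starEmp} \mid \mathtt{starDone} \mid \mathtt{stA}(p) \mid \mathtt{stB}(p,p')$. Maximality (inductive): $\mathtt{epsEmp}$, $\mathtt{oneFull}$, $\mathtt{starDone}$ are maximal; $\mathtt{par}(p_1,p_2)$, $\mathtt{catB}(p_1,p_2)$, $\mathtt{stB}(p_1,p_2)$ are maximal if $p_1$ and $p_2$ are; $\mathtt{inl}(p)$, $\mathtt{inr}(p)$ are maximal if $p$ is. Prefix typing $p : s$ (inductive): $\mathtt{epsEmp}:\varepsilon$; $\mathtt{oneEmp}:1$; $\mathtt{oneFull}:1$; $\mathtt{par}(p_1,p_2): s\|t$ if $p_1:s$, $p_2:t$; $\mathtt{catA}(p): s\cdot t$ if $p:s$; $\mathtt{catB}(p_1,p_2): s\cdot t$ if $p_1:s$, $p_1$ maximal, $p_2:t$; $\mathtt{sumEmp}: s+t$; $\mathtt{inl}(p):s+t$ if $p:s$; $\mathtt{inr}(p):s+t$ if $p:t$; $\mathtt{starEmp}:s^\star$; $\mathtt{starDone}:s^\star$;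 $\mathtt{stA}(p):s^\star$ if $p:s$; $\mathtt{stB}(p,p'):s^\star$ if $p:s$, $p$ maximal, $p':s^\star$. Nullability (inductive): $\varepsilon$ is nullable; $s\|t$ is nullable if $s$ and $t$ are; nothing else is nullable. The empty prefix: $\mathrm{emp}(\varepsilon)=\mathtt{epsEmp}$, $\mathrm{emp}(1)=\mathtt{oneEmp}$, $\mathrm{emp}(s\|t)=\mathtt{par}(\mathrm{emp}(s),\mathrm{emp}(t))$, $\mathrm{emp}(s+t)=\mathtt{sumEmp}$, $\mathrm{emp}(s\cdot t)=\mathtt{catA}(\mathrm{emp}(s))$, $\mathrm{emp}(s^\star)=\mathtt{starEmp}$. *)

Inductive ty : Type :=
| TOne : ty
| TEps : ty
| TCat : ty -> ty -> ty
| TPar : ty -> ty -> ty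
| TPlus : ty -> ty -> ty
| TStar : ty -> ty.

Inductive prefix : Type :=
| oneEmp : prefix
| oneFull : prefix
| epsEmp : prefix
| par : prefix -> prefix -> prefix
| catA : prefix -> prefix
| catB : prefix -> prefix -> prefix
| sumEmp : prefix
| inl : prefix -> prefix
| inr : prefix -> prefix
| starEmp : prefix
| starDone : prefix
| stA : prefix -> prefix
| stB : prefix -> prefix -> prefix.

Inductive maximal : prefix -> Prop :=
| MaxEpsEmp : maximal epsEmp
| MaxOneFull : maximal oneFull
| MaxStarDone : maximal starDone
| MaxPar : forall p1 p2, maximal p1 -> maximal p2 -> maximal (par p1 p2)
| MaxCatB : forall p1 p2, maximal p1 -> maximal p2 -> maximal (catB p1 p2)
| MaxStB : forall p1 p2, maximal p1 -> maximal p2 -> maximal (stB p1 p2)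
| MaxInl : forall p, maximal p -> maximal (inl p)
| MaxInr : forall p, maximal p -> maximal (inr p).

Inductive has_type : prefix -> ty -> Prop :=
| TyEpsEmp : has_type epsEmp TEps
| TyOneEmp : has_type oneEmp TOne
| TyOneFull : has_type oneFull TOne
| TyPar : forall p1 p2 s t, has_type p1 s -> has_type p2 t -> has_type (par p1 p2) (TPar s t)
| TyCatA : forall p s t, has_type p s -> has_type (catA p) (TCat s t)
| TyCatB : forall p1 p2 s t, has_type p1 s -> maximal p1 -> has_type p2 t ->
    has_type (catB p1 p2) (TCat s t)
| TySumEmp : forall s t, has_type sumEmp (TPlus s t)
| TyInl : forall p s t, has_type p s -> has_type (inl p) (TPlus s t)
| TyInr : forall p s t, has_type p t -> has_type (inr p) (TPlus s t)
| TyStarEmp : forall s, has_type starEmp (TStar s)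
| TyStarDone : forall s, has_type starDone (TStar s)
| TyStA : forall p s, has_type p s -> has_type (stA p) (TStar s)
| TyStB : forall p p' s, has_type p s -> maximal p -> has_type p' (TStar s) ->
    has_type (stB p p') (TStar s).

Inductive nullable : ty -> Prop :=
| NullEps : nullable TEps
| NullPar : forall s t, nullable s -> nullable t -> nullable (TPar s t).

Fixpoint emp (s : ty) : prefix :=
  match s with
  | TEps => epsEmp
  | TOne => oneEmp
  | TPar s t => par (emp s) (emp t)
  | TPlus _ _ => sumEmp
  | TCat s _ => catA (emp s)
  | TStar _ => starEmp
  end.


Theorem mainTheorem5 (s : ty) (p : prefix) :
  has_type p s -> nullable s -> p = emp s.
Proof.
  intros Hp Hs; revert p Hp.
  induction Hs as [| s t _ IHs _ IHt]; intros p Hp; inversion Hp; subst; simpl.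
  - reflexivity.
  - rewrite (IHs p1), (IHt p2) by assumption; reflexivity.
Qed.
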